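(* For any graph $G$ and any unit flow $F$ in $G$, there is an integral unit flow $F^*$ with $F^*[u,v]=F[u,v]$ for all $u,v\in V(G)$ and $\mathsf{inter}(F^* )\le\mathsf{inter}(F)$. Consequently, for every graph $G$ and every unit-weighted graph $H$, $$\mathsf{inter}^*_G(H)=\mathsf{inter}_G(H)\le\mathsf{con}_G(H).$$
   Context: Let $G=(V,E)$; $\mathcal P_{uv}$ is the set of paths in $G$ between $u$ and $v$, $\mathcal P=\bigcup\mathcal P_{uv}$. A flow is $F:\mathcal P\to[0,\infty)$, $F[u,v]=\sum_{p\in\mathcal P_{uv}}F(p)$. $F$ is integral if for each $u,v$ it is supported on at most one path of $\mathcal P_{uv}$, and a unit flow if $F[u,v]\in\{0,1\}$ for all $u,v$. Congestion: $\mathsf{con}(F)=\sum_{v}C_F(v)^2$, $C_F(v)=\sum_{p\ni v}F(p)$. Intersection number: $\mathsf{inter}(F)=\sum_{(u,v,u',v'):|\{u,v,u',v'\}|=4}\sum_{p\in\mathcal P_{uv},p'\in\mathcal P_{u'v'}}\sum_{x\in p\cap p'}F(p)F(p')$. For an edge-weighted graph $H$ with weights $w$, a flow $F$ in $G$ is an $H$-flow if there is an injective $\phi:V(H)\to V$ with $F[\phi(u),\phi(v)]\ge w(u,v)$ for every edge $\{u,v\}$ of $H$; unit-weighted means $w\equiv1$. Then $\mathsf{con}_G(H)=\min\mathsf{con}(F)$ and $\mathsf{inter}_G(H)=\min\mathsf{inter}(F)$ over $H$-flows $F$ in $G$, and $\mathsf{inter}^*_G(H)=\min\mathsf{inter}(F)$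 over integral $H$-flows $F$ in $G$. *)

From HB Require Import structures.
From mathcomp Require Import all_boot all_order all_algebra.
From mathcomp Require Import all_classical all_reals ereal.
Set Implicit Arguments. Unset Strict Implicit. Unset Printing Implicit Defensive.
Import Order.TTheory GRing.Theory Num.Theory.
Local Open Scope ring_scope.
Local Open Scope classical_set_scope.

Section Flows.
Variables (R : realType) (V : finType) (e : rel V).

Fixpoint seqs_upto (k : nat) : seq (seq V) :=
  if k is k'.+1 then [::] :: [seq x :: s | x <- enum V, s <- seqs_upto k']
  else [:: [::]].

Definition is_gpath (p : seq V) : bool :=
  if p is x :: q then path e x q && uniq p else false.

(* the (finite) set P of all paths of G; every simple path has at most #|V|
   vertices, so it occurs in seqs_upto #|V| *)
Definition gpaths : seq (seq V) := [seq p <- undup (seqs_upto #|V|) | is_gpath p].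

Definition paths_uv (u v : V) : seq (seq V) :=
  [seq p <- gpaths | (head u p == u) && (last u p == v)].

(* a flow F : P -> [0, oo) (values outside P are irrelevant) *)
Definition is_flow (F : seq V -> R) : Prop :=
  forall p, is_gpath p -> 0 <= F p.

Definition fval (F : seq V -> R) (u v : V) : R := \sum_(p <- paths_uv u v) F p.

Definition is_integral (F : seq V -> R) : Prop :=
  forall u v p1 p2, p1 \in paths_uv u v -> p2 \in paths_uv u v ->
    F p1 != 0 -> F p2 != 0 -> p1 = p2.

Definition is_unit_flow (F : seq V -> R) : Prop :=
  forall u v, fval F u v = 0 \/ fval F u v = 1.

Definition cong_at (F : seq V -> R) (x : V) : R :=
  \sum_(p <- gpaths | x \in p) F p.

Definition con (F : seq V -> R) : R := \sum_(x : V) cong_at F x ^+ 2.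

Definition inter (F : seq V -> R) : R :=
  \sum_(u : V) \sum_(v : V) \sum_(u' : V) \sum_(v' : V)
    if #|[set u; v; u'; v']| == 4%N then
      \sum_(p <- paths_uv u v) \sum_(p' <- paths_uv u' v')
        \sum_(x : V | (x \in p) && (x \in p')) F p * F p'
    else 0.

Definition is_Hflow (W : finType) (eH : rel W) (F : seq V -> R) : Prop :=
  is_flow F /\ exists phi : W -> V, injective phi /\
    forall a b, eH a b -> 1 <= fval F (phi a) (phi b).

(* con_G(H), inter_G(H), inter*_G(H) : minima over (integral) H-flows,
   rendered as extended-real infima (+oo if there is no H-flow) *)
Definition conG (W : finType) (eH : rel W) : \bar R :=
  ereal_inf [set (con F)%:E | F in [set F | is_Hflow eH F]].

Definition interG (W : finType) (eH : rel W) : \bar R :=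
  ereal_inf [set (inter F)%:E | F in [set F | is_Hflow eH F]].

Definition interStarG (W : finType) (eH : rel W) : \bar R :=
  ereal_inf [set (inter F)%:E | F in [set F | is_Hflow eH F /\ is_integral F]].

End Flows.

From HB Require Import structures.
From mathcomp Require Import all_boot all_order all_algebra.
From mathcomp Require Import all_classical all_reals ereal.
Import Order.TTheory GRing.Theory Num.Theory.
Local Open Scope ring_scope.

(* Fix a pair (u, v) with F[u, v] = 1.  A term F(p) F(p') of inter(F) needs four
   distinct endpoints, so at most one of p, p' runs from u to v: inter is affine in
   the restriction of F to P_uv, which is a probability distribution on P_uv.  Hence
   inter(F) is the F-weighted average of inter(F_q), where F_q moves the whole u-v
   flow onto the single path q, and the best q does not increase inter.  Treating
   the pairs one after another yields F*.  An H-flow dominates a unit H-flow (scale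
   each demanded pair down to one unit), inter is monotone in F, and inter <= con
   because con also counts the pairs of paths sharing an endpoint. *)

Lemma exists_seq_argmin {d} {T : orderType d} {I : eqType} {s : seq I} (f : I -> T) :
  s != [::] -> exists2 i, i \in s & forall j, j \in s -> (f i <= f j)%O.
Proof.
elim: s => [//|x [|y s] IH] _.
  by exists x => [|j]; rewrite ?inE // => /eqP->.
have [i si min_i] := IH isT.
have [le_xi|lt_ix] := leP (f x) (f i).
- exists x => [|j]; first by rewrite inE eqxx.
  by rewrite inE => /predU1P[->//|/min_i]; apply: le_trans.
- exists i => [|j]; first by rewrite inE si orbT.
  by rewrite inE => /predU1P[->|/min_i//]; apply: ltW.
Qed.

Section PathSums.
Variables (R : realType) (V : finType) (e : rel V).
Implicit Types (F G : seq V -> R) (p q : seq V) (u v : V).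

Lemma gpaths_gpath p : p \in gpaths e -> is_gpath e p.
Proof. by rewrite mem_filter => /andP[]. Qed.

Lemma uniq_gpaths : uniq (gpaths e).
Proof. by rewrite filter_uniq // undup_uniq. Qed.

Lemma uniq_paths_uv u v : uniq (paths_uv e u v).
Proof. exact: filter_uniq uniq_gpaths. Qed.

Lemma paths_uv_gpaths {u v p} : p \in paths_uv e u v -> p \in gpaths e.
Proof. by rewrite mem_filter => /andP[]. Qed.

Lemma paths_uv_cons u v p : p \in paths_uv e u v ->
  exists2 q, p = u :: q & last u q = v.
Proof.
rewrite mem_filter => /andP[/andP[hd /eqP lst] /gpaths_gpath].
by case: p hd lst => [//|x q] /= /eqP-> <- _; exists q.
Qed.

Lemma paths_uv_inj {u v u' v' p} :
  p \in paths_uv e u v -> p \in paths_uv e u' v' -> u = u' /\ v = v'.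
Proof.
move=> /paths_uv_cons[q -> <-] /paths_uv_cons[q' [-> ->] <-]; exact: conj.
Qed.

Lemma notin_paths_uv {u v u' v' p} : p \in paths_uv e u v ->
  ~~ ((u == u') && (v == v')) -> p \notin paths_uv e u' v'.
Proof.
move=> puv; apply: contra => /(paths_uv_inj puv)[-> ->]; exact/andP.
Qed.

Lemma sum_paths_uv (g : seq V -> R) :
  \sum_u \sum_v \sum_(p <- paths_uv e u v) g p = \sum_(p <- gpaths e) g p.
Proof.
under eq_bigr do under eq_bigr do rewrite big_filter big_mkcond.
under eq_bigr do rewrite exchange_big.
rewrite exchange_big big_seq [RHS]big_seq; apply: eq_bigr => -[|x q] /gpaths_gpath //= _.
rewrite (bigD1 x) //= [X in _ + X]big1 ?addr0 => [|u /negbTE ux]; last first.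
  by apply: big1 => v _; rewrite eq_sym ux.
rewrite eqxx (bigD1 (last x q)) //= eqxx big1 ?addr0 // => v /negbTE vq.
by rewrite eq_sym vq.
Qed.

Definition four_ends p p' : bool :=
  if (p, p') is (x :: q, y :: r) then
    #|[set x; last x q; y; last y r]%classic| == 4%N
  else false.

Lemma four_ends_paths_uv {u v u' v' p p'} :
  p \in paths_uv e u v -> p' \in paths_uv e u' v' ->
  four_ends p p' = (#|[set u; v; u'; v']%classic| == 4%N).
Proof. by move=> /paths_uv_cons[q -> <-] /paths_uv_cons[q' -> <-]. Qed.

Lemma not_four_ends_paths_uv u v p p' :
  p \in paths_uv e u v -> p' \in paths_uv e u v -> ~~ four_ends p p'.
Proof.
move=> puv p'uv; rewrite (four_ends_paths_uv puv p'uv).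
have uvuv : [set u; v; u; v]%classic =i [set u; v].
  by move=> x; rewrite !in_setU !in_set1 !inE; case: (x == u); case: (x == v).
by rewrite (eq_card uvuv) cards2; case: (u != v).
Qed.

Lemma interE F : inter e F =
  \sum_(p <- gpaths e) \sum_(p' <- gpaths e)
    if four_ends p p' then \sum_(x | (x \in p) && (x \in p')) F p * F p' else 0.
Proof.
rewrite /inter -sum_paths_uv; apply: eq_bigr => u _; apply: eq_bigr => v _.
under [RHS]eq_bigr do rewrite -sum_paths_uv.
rewrite [RHS]exchange_big; apply: eq_bigr => u' _; rewrite [RHS]exchange_big.
apply: eq_bigr => v' _; rewrite big_seq_cond [RHS]big_seq_cond.
case: ifP => [card4 | not4].
- apply: eq_bigr => p /andP[puv _]; rewrite big_seq_cond [RHS]big_seq_cond.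
  by apply: eq_bigr => p' /andP[p'uv _]; rewrite (four_ends_paths_uv puv p'uv) card4.
- apply/esym/big1 => p /andP[puv _]; apply: big1_seq => p' /andP[_ p'uv].
  by rewrite (four_ends_paths_uv puv p'uv) not4.
Qed.

Definition concentrate F (B : seq (seq V)) q : seq V -> R :=
  fun p => if p \in B then (p == q)%:R else F p.

Lemma concentrate_out F B q p : p \notin B -> concentrate F B q p = F p.
Proof. by rewrite /concentrate => /negbTE->. Qed.

Lemma concentrate_flow F B q : is_flow e F -> is_flow e (concentrate F B q).
Proof. by move=> F_ge0 p gp; rewrite /concentrate; case: ifP => // _; apply: F_ge0. Qed.

Lemma sum_concentrate_mul F (B : seq (seq V)) p p' :
  uniq B -> \sum_(q <- B) F q = 1 -> ~~ ((p \in B) && (p' \in B)) ->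
  \sum_(q <- B) F q * (concentrate F B q p * concentrate F B q p') = F p * F p'.
Proof.
rewrite /concentrate => uB sumB1.
case: (boolP (p \in B)) => pB; case: (boolP (p' \in B)) => p'B //= _.
- rewrite (bigD1_seq p) //= eqxx mul1r big1 ?addr0 // => q /negbTE qp.
  by rewrite eq_sym qp mul0r mulr0.
- rewrite (bigD1_seq p') //= eqxx mulr1 big1 ?addr0 1?mulrC // => q /negbTE qp'.
  by rewrite eq_sym qp' !mulr0.
- by rewrite -big_distrl /= sumB1 mul1r.
Qed.

Lemma inter_concentrate_avg {F u v} : fval e F u v = 1 ->
  inter e F = \sum_(q <- paths_uv e u v) F q * inter e (concentrate F (paths_uv e u v) q).
Proof.
move=> Fuv1; set B := paths_uv e u v.
transitivity (\sum_(q <- B) \sum_(p <- gpaths e) \sum_(p' <- gpaths e) F q *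
  if four_ends p p' then
    \sum_(x | (x \in p) && (x \in p')) concentrate F B q p * concentrate F B q p'
  else 0); last first.
  apply: eq_bigr => q _; rewrite interE big_distrr.
  by apply: eq_bigr => p _; rewrite big_distrr.
rewrite interE [RHS]exchange_big; apply: eq_bigr => p _.
rewrite [RHS]exchange_big; apply: eq_bigr => p' _.
case: ifP => [four | _]; last by rewrite big1 // => q _; rewrite mulr0.
under [RHS]eq_bigr do rewrite big_distrr.
rewrite [RHS]exchange_big; apply: eq_bigr => x _ /=.
apply/esym/sum_concentrate_mul => //; first exact: uniq_paths_uv.
apply: contraL four => /andP[pB p'B]; exact: not_four_ends_paths_uv pB p'B.
Qed.

Definition integral_at F u v : Prop :=
  forall p1 p2, p1 \in paths_uv e u v -> p2 \in paths_uv e u v ->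
    F p1 != 0 -> F p2 != 0 -> p1 = p2.

Lemma concentrate_integral_at F u v q :
  integral_at (concentrate F (paths_uv e u v) q) u v.
Proof.
move=> p1 p2 p1uv p2uv; rewrite /concentrate p1uv p2uv.
by case: (p1 =P q) => [->|_]; case: (p2 =P q) => [->|_]; rewrite //= eqxx.
Qed.

Lemma flow_fval0_integral_at F u v :
  is_flow e F -> fval e F u v = 0 -> integral_at F u v.
Proof.
move=> F_ge0 /eqP; rewrite /fval big_seq psumr_eq0 => [/allP Fuv0|p]; last first.
  by move/paths_uv_gpaths/gpaths_gpath; apply: F_ge0.
by move=> p1 p2 /[dup] p1uv /Fuv0; rewrite p1uv => /= ->.
Qed.

Lemma fval_concentrate F u v q u' v' :
  fval e F u v = 1 -> q \in paths_uv e u v ->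
  fval e (concentrate F (paths_uv e u v) q) u' v' = fval e F u' v'.
Proof.
move=> Fuv1 quv; have [/andP[/eqP-> /eqP->] | uv'] := boolP ((u' == u) && (v' == v)).
  rewrite Fuv1 /fval big_seq (eq_bigr (fun p => (p == q)%:R)) => [|p puv]; last first.
    by rewrite /concentrate puv.
  rewrite -big_seq (bigD1_seq q) ?uniq_paths_uv //= eqxx big1 ?addr0 // => p.
  by move/negbTE->.
rewrite /fval big_seq [RHS]big_seq; apply: eq_bigr => p puv'.
by rewrite concentrate_out // (notin_paths_uv puv').
Qed.

Lemma exists_concentrate_le_inter {F u v} : is_flow e F -> fval e F u v = 1 ->
  exists2 q, q \in paths_uv e u v &
    inter e (concentrate F (paths_uv e u v) q) <= inter e F.
Proof.
move=> F_ge0 Fuv1; set B := paths_uv e u v.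
have B_neq0 : B != [::].
  by apply/eqP => B0; move: Fuv1; rewrite /fval -/B B0 big_nil => /eqP; rewrite eq_sym oner_eq0.
have [q qB min_q] := exists_seq_argmin (fun q => inter e (concentrate F B q)) B_neq0.
exists q => //; rewrite (inter_concentrate_avg Fuv1) -/B.
rewrite -[X in X <= _]mul1r -Fuv1 /fval -/B big_distrl /= !big_seq.
apply: ler_sum => p pB; apply: ler_wpM2l; last exact: min_q.
exact/F_ge0/gpaths_gpath/(paths_uv_gpaths pB).
Qed.

Lemma eq_integral_at F G u v : {in paths_uv e u v, F =1 G} ->
  integral_at F u v -> integral_at G u v.
Proof. by move=> FG intF p1 p2 p1uv p2uv; rewrite -!FG //; apply: intF. Qed.

Lemma exists_integral_at F u v : is_flow e F -> is_unit_flow e F ->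
  exists G, [/\ is_flow e G, (forall u' v', fval e G u' v' = fval e F u' v'),
    integral_at G u v, {in [predC paths_uv e u v], G =1 F} & inter e G <= inter e F].
Proof.
move=> F_ge0 F_unit; have [Fuv0 | Fuv1] := F_unit u v.
  by exists F; split=> //; apply: flow_fval0_integral_at.
have [q quv le_inter] := exists_concentrate_le_inter F_ge0 Fuv1.
exists (concentrate F (paths_uv e u v) q); split=> //.
- exact: concentrate_flow.
- by move=> u' v'; apply: fval_concentrate.
- exact: concentrate_integral_at.
- by move=> p; apply: concentrate_out.
Qed.

Lemma exists_integral_on_pairs F (s : seq (V * V)) :
  is_flow e F -> is_unit_flow e F ->
  exists G, [/\ is_flow e G, (forall u v, fval e G u v = fval e F u v),
    (forall uv, uv \in s -> integral_at G uv.1 uv.2) & inter e G <= inter e F].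
Proof.
move=> F_ge0 F_unit; elim: s => [|[u v] s [G [G_ge0 fvalG intG le_GF]]].
  by exists F; split.
have G_unit : is_unit_flow e G by move=> u' v'; rewrite fvalG.
have [H [H_ge0 fvalH intH HG le_HG]] := exists_integral_at G u v G_ge0 G_unit.
exists H; split=> //.
- by move=> u' v'; rewrite fvalH.
- move=> [u' v']; rewrite inE => /predU1P[[-> ->] // | uv's] /=.
  have [/andP[/eqP-> /eqP->] // | neq] := boolP ((u' == u) && (v' == v)).
  apply: eq_integral_at (intG _ uv's) => p puv'.
  by rewrite HG //= inE (notin_paths_uv puv' neq).
- exact: le_trans le_HG le_GF.
Qed.

Lemma exists_integral_unit_flow {F} : is_flow e F -> is_unit_flow e F ->
  exists Fs, [/\ is_flow e Fs, is_integral e Fs, is_unit_flow e Fs,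
    (forall u v, fval e Fs u v = fval e F u v) & inter e Fs <= inter e F].
Proof.
move=> F_ge0 F_unit.
have [G [G_ge0 fvalG intG le_GF]] :=
  exists_integral_on_pairs F [seq (u, v) | u <- enum V, v <- enum V] F_ge0 F_unit.
exists G; split=> // [u v | u v]; last by rewrite fvalG.
by apply: (intG (u, v)); apply: allpairs_f; rewrite mem_enum.
Qed.

Lemma ler_inter {F G} : is_flow e F ->
  (forall p, is_gpath e p -> F p <= G p) -> inter e F <= inter e G.
Proof.
move=> F_ge0 le_FG; rewrite !interE !big_seq; apply: ler_sum => p /gpaths_gpath gp.
rewrite !big_seq; apply: ler_sum => p' /gpaths_gpath gp'.
case: ifP => // _; apply: ler_sum => x _.
by apply: ler_pM; rewrite ?F_ge0 ?le_FG.
Qed.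

Lemma conE F : con e F =
  \sum_(p <- gpaths e) \sum_(p' <- gpaths e) \sum_(x | (x \in p) && (x \in p')) F p * F p'.
Proof.
rewrite /con /cong_at; transitivity (\sum_x \sum_(p <- gpaths e) \sum_(p' <- gpaths e)
  if (x \in p) && (x \in p') then F p * F p' else 0).
  apply: eq_bigr => x _; rewrite expr2 big_distrl big_mkcond; apply: eq_bigr => p _ /=.
  by case: (x \in p); [rewrite big_distrr big_mkcond | rewrite big1].
rewrite exchange_big; apply: eq_bigr => p _; rewrite exchange_big.
by apply: eq_bigr => p' _; rewrite [RHS]big_mkcond.
Qed.

Lemma inter_le_con {F} : is_flow e F -> inter e F <= con e F.
Proof.
move=> F_ge0; rewrite interE conE !big_seq; apply: ler_sum => p /gpaths_gpath gp.
rewrite !big_seq; apply: ler_sum => p' /gpaths_gpath gp'.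
by case: ifP => // _; apply: sumr_ge0 => x _; apply: mulr_ge0; apply: F_ge0.
Qed.

Section Rescale.
Variables (F : seq V -> R) (D : rel V).
Hypothesis F_ge0 : is_flow e F.
Hypothesis fval_ge1 : forall {u v}, D u v -> 1 <= fval e F u v.

Definition rescale (p : seq V) : R :=
  if p is x :: q then
    if D x (last x q) then F p / fval e F x (last x q) else 0
  else 0.

Lemma rescale_paths_uv u v p : p \in paths_uv e u v ->
  rescale p = if D u v then F p / fval e F u v else 0.
Proof. by move=> /paths_uv_cons[q -> <-]. Qed.

Lemma fval_rescale u v : fval e rescale u v = (D u v)%:R.
Proof.
rewrite /fval big_seq (eq_bigr _ (rescale_paths_uv u v)) -big_seq.
have [Duv | _] := boolP (D u v); last by rewrite big1.
have Fuv_gt0 : 0 < fval e F u v := lt_le_trans ltr01 (fval_ge1 Duv).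
by rewrite -big_distrl /= divff // gt_eqF.
Qed.

Lemma rescale_flow : is_flow e rescale.
Proof.
move=> [//|x q] gp /=; case: ifP => // Dxq.
by rewrite divr_ge0 ?F_ge0 // (le_trans ler01 (fval_ge1 Dxq)).
Qed.

Lemma rescale_le p : is_gpath e p -> rescale p <= F p.
Proof.
case: p => [//|x q] gp /=; case: ifP => [Dxq | _]; last exact: F_ge0.
have Fxq_gt0 := lt_le_trans ltr01 (fval_ge1 Dxq).
by rewrite ler_pdivrMr // ler_peMr ?F_ge0 ?fval_ge1.
Qed.

End Rescale.

Lemma exists_unit_Hflow_le {W : finType} {eH : rel W} {F} : is_Hflow e eH F ->
  exists G, [/\ is_Hflow e eH G, is_unit_flow e G & forall p, is_gpath e p -> G p <= F p].
Proof.
move=> [F_ge0 [phi [phi_inj demand]]].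
pose D u v := [exists ab : W * W, [&& eH ab.1 ab.2, phi ab.1 == u & phi ab.2 == v]].
have fval_ge1 u v : D u v -> 1 <= fval e F u v.
  by move=> /existsP[[a b] /and3P[/= ab /eqP<- /eqP<-]]; apply: demand.
exists (rescale F D); split.
- split; first exact: rescale_flow.
  exists phi; split=> // a b ab; rewrite fval_rescale //.
  suff -> : D (phi a) (phi b) by [].
  by apply/existsP; exists (a, b); rewrite /= ab !eqxx.
- by move=> u v; rewrite fval_rescale //; case: (D u v); [right | left].
- exact: rescale_le.
Qed.

Lemma exists_integral_Hflow_le {W : finType} {eH : rel W} {F} : is_Hflow e eH F ->
  exists2 Fs, is_Hflow e eH Fs /\ is_integral e Fs & inter e Fs <= inter e F.
Proof.
move=> F_Hflow; have [G [[G_ge0 [phi [phi_inj demandG]]] G_unit le_GF]] :=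
  exists_unit_Hflow_le F_Hflow.
have [Fs [Fs_ge0 Fs_int _ fvalFs le_inter]] := exists_integral_unit_flow G_ge0 G_unit.
exists Fs; first by split=> //; split=> //; exists phi; split=> // a b /demandG; rewrite fvalFs.
by apply: le_trans le_inter (ler_inter G_ge0 le_GF).
Qed.

Lemma interStarG_eq_interG (W : finType) (eH : rel W) :
  interStarG R e eH = interG R e eH.
Proof.
apply/eqP; rewrite eq_le; apply/andP; split.
- apply: le_ereal_inf_tmp => _ [F F_Hflow <-].
  have [Fs Fs_Hflow_int le_inter] := exists_integral_Hflow_le F_Hflow.
  by apply: ge_ereal_inf; exists (inter e Fs)%:E; [exists Fs | rewrite lee_fin].
- by apply: ereal_inf_le_tmp => _ [F [F_Hflow _] <-]; exists F.
Qed.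

Lemma interG_le_conG (W : finType) (eH : rel W) :
  (interG R e eH <= conG R e eH)%E.
Proof.
apply: le_ereal_inf_tmp => _ [F F_Hflow <-].
apply: ge_ereal_inf; exists (inter e F)%:E; first by exists F.
by rewrite lee_fin inter_le_con //; case: F_Hflow.
Qed.

End PathSums.

Theorem lemma3p3 (R : realType) (V : finType) (e : rel V)
  (e_sym : symmetric e) (e_irr : irreflexive e) :
  (forall F : seq V -> R, is_flow e F -> is_unit_flow e F ->
     exists Fs : seq V -> R,
       [/\ is_flow e Fs, is_integral e Fs, is_unit_flow e Fs,
           (forall u v, fval e Fs u v = fval e F u v)
         & inter e Fs <= inter e F])
  /\
  (forall (W : finType) (eH : rel W), symmetric eH -> irreflexive eH ->
     interStarG R e eH = interG R e eH /\ (interG R e eH <= conG R e eH)%E).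
Proof.
split=> [F | W eH _ _]; first exact: exists_integral_unit_flow.
by split; [apply: interStarG_eq_interG | apply: interG_le_conG].
Qed.
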